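(* Let $G$ be a group, $\mathcal{P}$ a collection of infinite subgroups of $G$, and $X\subseteq G$ with $\mathcal{P}\hookrightarrow_h(G,X)$. Let $\hat\Gamma_0=\hat\Gamma(G,\mathcal{P},X)$ and let $Y\subseteq G$ be finite. Let $\hat\Gamma=\hat\Gamma_0\cup(\Gamma(G,X\cup Y)\setminus\Gamma(G,X))$, i.e. $\hat\Gamma_0$ with all edges $\{g,gy\}$, $g\in G$, $y\in Y$, added. Then $\hat\Gamma_0$ is quasi-isometric to $\hat\Gamma$. Moreover, if $\hat\Gamma_0$ is a $(G,\mathcal{P})$--graph (respectively a thick $(G,\mathcal{P})$--graph), then so is $\hat\Gamma$.
   Context: $\Gamma(G,Z)$ is the Cayley graph of $G$ with respect to $Z$. Coned-off Cayley graph $\hat\Gamma(G,\mathcal{P},X)$: vertex set $G\sqcup\bigsqcup_{P\in\mathcal{P}}G/P$, edges $\{g,gx\}$ ($x\in X$) and $\{g,gP\}$. $\mathcal{P}\hookrightarrow_h(G,X)$ means: $G=\langle X\cup\bigcup\mathcal{P}\rangle$, the Cayley graph with respect to $X\sqcup\bigsqcup\mathcal{P}$ is hyperbolic, and each $P\in\mathcal{P}$ is locally finite for the metric $\hat d_P(h,k)$ = length of a shortest path from $h$ to $k$ in that Cayley graph using no edge labelled by an element of $P$ with both endpoints in $P$. A graph is fine at $v$ if the angle metric $\angle_v(x,y)$ (length of a shortest path between neighbours $x,y$ of $v$ avoiding $v$) is locally finite. A $(G,\mathcal{P})$--graph: connected hyperbolic $G$-graph, finitely many vertex orbits, vertex stabilizers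 finite or conjugates of members of $\mathcal{P}$ (each $P\in\mathcal{P}$ being some vertex stabilizer), finite edge stabilizers, fine at vertices with infinite stabilizer. It is thick (with $\mathcal{P}=\{P_1,\dots,P_n\}$) if it contains vertices $u_0,v_1,\dots,v_n$ with trivial stabilizer of $u_0$, edges $\{u_0,v_k\}$, stabilizer of $v_k$ equal to $P_k$; there is a finite relative generating set $S$ with edges $\{u_0,s.u_0\}$; and there are representatives $u_0,\dots,u_l$ of the orbits of vertices with finite stabilizer with edges $\{u_0,u_j\}$. *)

From Stdlib Require Import List Arith.
Import ListNotations.

Record Grp := {
  gcar :> Type;
  gmul : gcar -> gcar -> gcar;
  gone : gcar;
  ginv : gcar -> gcar;
  gassoc : forall x y z, gmul x (gmul y z) = gmul (gmul x y) z;
  gmul1l : forall x, gmul gone x = x;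
  gmul1r : forall x, gmul x gone = x;
  gmulVl : forall x, gmul (ginv x) x = gone;
  gmulVr : forall x, gmul x (ginv x) = gone
}.
Arguments gmul {g} _ _.
Arguments gone {g}.
Arguments ginv {g} _.

Definition finite_set {T : Type} (S : T -> Prop) : Prop :=
  exists l : list T, forall x, S x -> In x l.

Definition subgroup {G : Grp} (H : G -> Prop) : Prop :=
  H gone /\ (forall x y, H x -> H y -> H (gmul x y)) /\
  (forall x, H x -> H (ginv x)).

Definition generates {G : Grp} (A : G -> Prop) : Prop :=
  forall H : G -> Prop, subgroup H -> (forall a, A a -> H a) -> forall g, H g.

Fixpoint is_walk {V : Type} (adj : V -> V -> Prop) (u : V) (l : list V) : Prop :=
  match l with
  | [] => True
  | v :: l' => adj u v /\ is_walk adj v l'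
  end.

Definition reach_le {V : Type} (adj : V -> V -> Prop) (u v : V) (n : nat) : Prop :=
  exists l, is_walk adj u l /\ last l u = v /\ length l <= n.

(* l (the vertices after u) is a geodesic from u to v *)
Definition geodesic {V : Type} (adj : V -> V -> Prop) (u v : V) (l : list V) : Prop :=
  is_walk adj u l /\ last l u = v /\
  forall l', is_walk adj u l' -> last l' u = v -> length l <= length l'.

Definition connected {V : Type} (adj : V -> V -> Prop) : Prop :=
  forall u v, exists n, reach_le adj u v n.

Definition hyperbolic {V : Type} (adj : V -> V -> Prop) : Prop :=
  connected adj /\
  exists d : nat, forall x y z lxy lyz lzx,
    geodesic adj x y lxy -> geodesic adj y z lyz -> geodesic adj z x lzx ->
    forall w, In w (x :: lxy) ->
      exists w', (In w' (y :: lyz) \/ In w' (z :: lzx)) /\ reach_le adj w w' d.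

Definition quasi_isometric {V W : Type} (adjV : V -> V -> Prop)
    (adjW : W -> W -> Prop) : Prop :=
  exists (f : V -> W) (lam c : nat),
    (forall u v n, reach_le adjV u v n -> reach_le adjW (f u) (f v) (lam * n + c)) /\
    (forall u v n, reach_le adjW (f u) (f v) n -> reach_le adjV u v (lam * n + c)) /\
    (forall w, exists u, reach_le adjW (f u) w c).

(* fineness at v: the angle metric on the neighbours of v is locally finite *)
Definition avoid_adj {V : Type} (adj : V -> V -> Prop) (v : V) : V -> V -> Prop :=
  fun a b => adj a b /\ a <> v /\ b <> v.

Definition fine_at {V : Type} (adj : V -> V -> Prop) (v : V) : Prop :=
  forall x n, adj v x -> x <> v ->
    finite_set (fun y => adj v y /\ y <> v /\ reach_le (avoid_adj adj v) x y n).

Definition cay_adj {G : Grp} (Z : G -> Prop) (g h : G) : Prop :=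
  exists z, Z z /\ (h = gmul g z \/ g = gmul h z).

(* Letters of the alphabet X ⊔ ⊔_i P i : (None, x) is the letter x ∈ X,
   (Some i, p) is the letter p of the copy of P i; the boolean gives the
   direction in which the edge is traversed. *)
Definition letter_ok {G : Grp} {I : Type} (P : I -> G -> Prop) (X : G -> Prop)
    (o : option I) (z : G) : Prop :=
  match o with None => X z | Some j => P j z end.

Definition step {G : Grp} (cur z : G) (b : bool) : G :=
  if b then gmul cur z else gmul cur (ginv z).

(* admissible words for d^_i: no edge labelled by a letter of the copy of
   P i with both endpoints in P i *)
Fixpoint adm_word {G : Grp} {I : Type} (P : I -> G -> Prop) (X : G -> Prop)
    (i : I) (cur : G) (w : list (option I * G * bool)) : Prop :=
  match w with
  | [] => True
  | (o, z, b) :: w' =>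
      letter_ok P X o z /\ ~ (o = Some i /\ P i cur) /\
      adm_word P X i (step cur z b) w'
  end.

Fixpoint word_end {G : Grp} {I : Type} (cur : G) (w : list (option I * G * bool)) : G :=
  match w with
  | [] => cur
  | (_, z, b) :: w' => word_end (step cur z b) w'
  end.

Definition dhat_le {G : Grp} {I : Type} (P : I -> G -> Prop) (X : G -> Prop)
    (i : I) (h k : G) (n : nat) : Prop :=
  exists w, adm_word P X i h w /\ word_end h w = k /\ length w <= n.

Definition gen_all {G : Grp} {I : Type} (P : I -> G -> Prop) (X : G -> Prop) : G -> Prop :=
  fun g => X g \/ exists i, P i g.

Definition hyp_emb (G : Grp) (I : Type) (P : I -> G -> Prop) (X : G -> Prop) : Prop :=
  generates (gen_all P X) /\
  hyperbolic (cay_adj (gen_all P X)) /\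
  (forall i h n, P i h -> finite_set (fun k => P i k /\ dhat_le P X i h k n)).

Definition is_lcoset {G : Grp} (H : G -> Prop) (C : G -> Prop) : Prop :=
  exists a : G, forall h, C h <-> exists p, H p /\ h = gmul a p.

(* vertex set  G ⊔ ⊔_i G / P i  (left cosets as subsets of G) *)
Definition CVert (G : Grp) (I : Type) (P : I -> G -> Prop) : Type :=
  (G + { i : I & { C : G -> Prop | is_lcoset (P i) C } })%type.

Lemma lcoset_translate (G : Grp) (H : G -> Prop) (C : G -> Prop) (g : G) :
  is_lcoset H C -> is_lcoset H (fun h => C (gmul (ginv g) h)).
Proof.
  intros [a Ha]. exists (gmul g a). intro h. rewrite Ha. split.
  - intros [p [Hp E]]. exists p. split; [exact Hp|].
    rewrite <- gassoc, <- E, gassoc, gmulVr, gmul1l. reflexivity.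
  - intros [p [Hp E]]. exists p. split; [exact Hp|].
    rewrite E, gassoc, gassoc, gmulVl, gmul1l. reflexivity.
Qed.

Definition cact (G : Grp) (I : Type) (P : I -> G -> Prop) (g : G)
    (v : CVert G I P) : CVert G I P :=
  match v with
  | inl h => inl (gmul g h)
  | inr (existT _ i (exist _ C pf)) =>
      inr (existT _ i (exist _ (fun h => C (gmul (ginv g) h))
                         (lcoset_translate G (P i) C g pf)))
  end.

Definition coned_adj (G : Grp) (I : Type) (P : I -> G -> Prop) (X : G -> Prop)
    (u v : CVert G I P) : Prop :=
  match u, v with
  | inl g, inl h => exists x, X x /\ (h = gmul g x \/ g = gmul h x)
  | inl g, inr c => proj1_sig (projT2 c) g
  | inr c, inl g => proj1_sig (projT2 c) g
  | inr _, inr _ => False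
  end.

Definition coned_adj_plus (G : Grp) (I : Type) (P : I -> G -> Prop)
    (X Y : G -> Prop) (u v : CVert G I P) : Prop :=
  coned_adj G I P X u v \/
  match u, v with
  | inl g, inl h => exists y, Y y /\ (h = gmul g y \/ g = gmul h y)
  | _, _ => False
  end.

Definition stab {G : Grp} {V : Type} (act : G -> V -> V) (v : V) : G -> Prop :=
  fun g => act g v = v.

Definition edge_stab {G : Grp} {V : Type} (act : G -> V -> V) (u v : V) : G -> Prop :=
  fun g => (act g u = u /\ act g v = v) \/ (act g u = v /\ act g v = u).

Definition GP_graph (G : Grp) (I : Type) (P : I -> G -> Prop) (V : Type)
    (act : G -> V -> V) (adj : V -> V -> Prop) : Prop :=
  (forall v, act gone v = v) /\
  (forall g h v, act (gmul g h) v = act g (act h v)) /\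
  (forall g u v, adj u v <-> adj (act g u) (act g v)) /\
  hyperbolic adj /\
  (exists l : list V, forall v, exists u g, In u l /\ v = act g u) /\
  (forall v, finite_set (stab act v) \/
     exists i a, forall g, stab act v g <-> exists p, P i p /\ g = gmul (gmul a p) (ginv a)) /\
  (forall i, exists v, forall g, stab act v g <-> P i g) /\
  (forall u v, adj u v -> finite_set (edge_stab act u v)) /\
  (forall v, ~ finite_set (stab act v) -> fine_at adj v).

Definition thick_GP_graph (G : Grp) (I : Type) (P : I -> G -> Prop) (V : Type)
    (act : G -> V -> V) (adj : V -> V -> Prop) : Prop :=
  GP_graph G I P V act adj /\
  (exists lI : list I, forall i, In i lI) /\
  exists u0 : V,
    (forall g, act g u0 = u0 -> g = gone) /\
    (forall i, exists v, adj u0 v /\ forall g, stab act v g <-> P i g) /\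
    (exists S : list G,
        generates (fun g => In g S \/ exists i, P i g) /\
        forall s, In s S -> adj u0 (act s u0)) /\
    (exists reps : list V,
        In u0 reps /\
        (forall u, In u reps -> finite_set (stab act u)) /\
        (forall v, finite_set (stab act v) -> exists u g, In u reps /\ v = act g u) /\
        (forall u w g, In u reps -> In w reps -> w = act g u -> u = w) /\
        (forall u, In u reps -> u <> u0 -> adj u0 u)).

(* Each new edge {g, g y} is a translate of one of finitely many walks of length at most L
   in the coned-off Cayley graph, which is connected since the Cayley graph with respect
   to X and the P i is.  Hence the identity is a quasi-isometry, and by the Morse lemma
   geodesics of the new graph fellow-travel geodesics of the old one, so slim triangles
   persist.  Vertices, action and vertex stabilizers are unchanged, and a new edge {a, b}
   is stabilized only by 1 and b a^-1.  Fineness at a cone vertex v: replacing the edges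
   of a v-avoiding walk of the new graph by the translated walks gives an old walk which
   may cross v, but it enters and leaves v at group vertices differing by one of finitely
   many quotients u^-1 u' of vertices of the replacement walks, so finitely many angle
   balls of the old graph cover an angle ball of the new one. *)

From Stdlib Require Import List Arith Lia Wf_nat ClassicalEpsilon Classical.
Import ListNotations.

Lemma last_cons_cons {T : Type} (l : list T) (a d : T) : last (a :: l) d = last l a.
Proof.
  revert a d; induction l as [|b l IH]; intros a d; [reflexivity|].
  change (last (a :: b :: l) d) with (last (b :: l) d). now rewrite !IH.
Qed.

Lemma last_app_default {T : Type} (l1 l2 : list T) (d : T) :
  last (l1 ++ l2) d = last l2 (last l1 d).
Proof.
  revert d; induction l1 as [|a l1 IH]; intros d; [reflexivity|].
  rewrite <- app_comm_cons, !last_cons_cons. apply IH.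
Qed.

Lemma last_In_cons {T : Type} (l : list T) (d : T) : In (last l d) (d :: l).
Proof.
  revert d; induction l as [|a l IH]; intros d; [now left|].
  rewrite last_cons_cons. right. apply IH.
Qed.

Lemma last_map_default {A B : Type} (f : A -> B) (l : list A) (u : A) :
  last (map f l) (f u) = f (last l u).
Proof.
  revert u; induction l as [|a l IH]; intros u; [reflexivity|].
  cbn [map]. rewrite !last_cons_cons. apply IH.
Qed.

Lemma last_eq_nth {T : Type} (l : list T) (u d : T) : last l u = nth (length l) (u :: l) d.
Proof.
  revert u; induction l as [|a l IH]; intros u; [reflexivity|].
  now rewrite last_cons_cons, (IH a).
Qed.

Lemma nth_cons_beyond {T : Type} (l : list T) (u v : T) (r : nat) :
  last l u = v -> length l <= r -> nth r (u :: l) v = v.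
Proof.
  intros Hl Hr. destruct (Nat.eq_dec r (length l)) as [->|Hne].
  - now rewrite <- last_eq_nth.
  - apply nth_overflow. simpl. lia.
Qed.

Lemma split_at_first {T : Type} (v : T) (l : list T) :
  In v l -> exists l1 l2, l = l1 ++ v :: l2 /\ ~ In v l1.
Proof.
  induction l as [|a l IH]; intros H; [destruct H|].
  destruct (classic (a = v)) as [<-|Hav].
  - now exists [], l.
  - destruct H as [H|H]; [contradiction|]. destruct (IH H) as (l1 & l2 & -> & Hn).
    exists (a :: l1), l2. split; [reflexivity|]. intros [E|E]; contradiction.
Qed.

Lemma split_at_last {T : Type} (v : T) (l : list T) :
  In v l -> exists l1 l2, l = l1 ++ v :: l2 /\ ~ In v l2.
Proof.
  induction l as [|a l IH]; intros H; [destruct H|].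
  destruct (classic (In v l)) as [Hl|Hl].
  - destruct (IH Hl) as (l1 & l2 & -> & Hn). now exists (a :: l1), l2.
  - destruct H as [<-|H]; [|contradiction]. now exists [], l.
Qed.

Lemma nat_least (Q : nat -> Prop) :
  (exists n, Q n) -> exists n, Q n /\ forall m, Q m -> n <= m.
Proof.
  intros H.
  destruct (dec_inh_nat_subset_has_unique_least_element Q (fun n => classic (Q n)) H)
    as (n & [Hn Hmin] & _).
  eauto.
Qed.

Lemma finite_set_sub {T : Type} (S1 S2 : T -> Prop) :
  finite_set S1 -> (forall a, S2 a -> S1 a) -> finite_set S2.
Proof. intros [l Hl] H. exists l. auto. Qed.

Lemma finite_set_bigcup {T : Type} (A : list T) (R : T -> T -> Prop) :
  (forall b, In b A -> finite_set (R b)) -> finite_set (fun a => exists b, In b A /\ R b a).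
Proof.
  induction A as [|b A IH]; intros H.
  - exists []. intros a (b & [] & _).
  - destruct (H b (or_introl eq_refl)) as [l1 Hl1].
    destruct IH as [l2 Hl2]; [intros; apply H; now right|].
    exists (l1 ++ l2). intros a (b' & [<-|Hb] & Hr); apply in_or_app; eauto.
Qed.

Section Walks.
Context {V : Type} (adj : V -> V -> Prop).

Lemma is_walk_app (l1 l2 : list V) (u : V) :
  is_walk adj u (l1 ++ l2) <-> is_walk adj u l1 /\ is_walk adj (last l1 u) l2.
Proof.
  revert u; induction l1 as [|a l1 IH]; intros u; cbn [is_walk app]; [tauto|].
  rewrite IH, last_cons_cons. tauto.
Qed.

Lemma reach_le_refl (u : V) : reach_le adj u u 0.
Proof. now exists []. Qed.

Lemma reach_le_mono (u v : V) (m n : nat) : reach_le adj u v m -> m <= n -> reach_le adj u v n.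
Proof. intros (l & Hw & Hl & Hlen) Hmn. exists l. repeat split; auto; lia. Qed.

Lemma reach_le_trans (u v w : V) (m n : nat) :
  reach_le adj u v m -> reach_le adj v w n -> reach_le adj u w (m + n).
Proof.
  intros (l1 & H1 & <- & H3) (l2 & K1 & <- & K3). exists (l1 ++ l2).
  rewrite is_walk_app, last_app_default, length_app. repeat split; auto; lia.
Qed.

Lemma reach_le_adj (u v : V) : adj u v -> reach_le adj u v 1.
Proof. intros H. exists [v]. simpl. auto. Qed.

Lemma reach_le_1 (u v : V) : reach_le adj u v 1 -> u = v \/ adj u v.
Proof.
  intros ([|a [|b l]] & Hw & Hl & Hlen); simpl in *; auto; try lia.
  subst. tauto.
Qed.

Lemma reach_le_walk (u : V) (l : list V) : is_walk adj u l -> reach_le adj u (last l u) (length l).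
Proof. intros H. now exists l. Qed.

Lemma walk_nth_reach_le (l : list V) (u d : V) (i j : nat) :
  is_walk adj u l -> i <= j -> j <= length l ->
  reach_le adj (nth i (u :: l) d) (nth j (u :: l) d) (j - i).
Proof.
  revert u i j; induction l as [|a l IH]; intros u i j Hw Hij Hj; cbn [length] in *.
  - replace i with 0 by lia; replace j with 0 by lia. apply reach_le_refl.
  - destruct Hw as [Ha Hw]. destruct i as [|i], j as [|j]; try lia.
    + apply reach_le_refl.
    + replace (S j - 0) with (1 + (j - 0)) by lia.
      eapply reach_le_trans; [apply reach_le_adj, Ha|apply (IH a 0 j); auto; lia].
    + replace (S j - S i) with (j - i) by lia. apply IH; auto; lia.
Qed.

Lemma walk_of_fun (g : nat -> V) (m k : nat) :
  (forall i, k <= i -> i < k + m -> adj (g i) (g (S i))) -> is_walk adj (g k) (map g (seq (S k) m)).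
Proof.
  revert k; induction m as [|m IH]; intros k H; simpl; auto.
  split; [apply H; lia|]. apply IH. intros i Hi1 Hi2. apply H; lia.
Qed.

Lemma last_map_seq (g : nat -> V) (m k : nat) : last (map g (seq (S k) m)) (g k) = g (k + m).
Proof.
  revert k; induction m as [|m IH]; intros k; cbn [seq map].
  - simpl. f_equal; lia.
  - rewrite last_cons_cons, IH. f_equal; lia.
Qed.

Lemma In_map_seq (g : nat -> V) (m : nat) (w : V) :
  In w (g 0 :: map g (seq 1 m)) <-> exists i, i <= m /\ w = g i.
Proof.
  simpl. rewrite in_map_iff. split.
  - intros [H|(x & Hx & Hin)]; [exists 0; split; auto; lia|].
    apply in_seq in Hin. exists x. split; auto; lia.
  - intros ([|i] & Hi & ->); auto. right. exists (S i). split; auto. apply in_seq. lia.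
Qed.

Lemma reach_le_sub (adj' : V -> V -> Prop) :
  (forall u v, adj u v -> adj' u v) -> forall u v n, reach_le adj u v n -> reach_le adj' u v n.
Proof.
  intros Hsub u v n (l & Hw & Hl). exists l. split; auto. clear Hl. revert u Hw.
  induction l; simpl; intuition.
Qed.

Hypothesis adj_sym : forall u v, adj u v -> adj v u.

Lemma reach_le_sym (u v : V) (n : nat) : reach_le adj u v n -> reach_le adj v u n.
Proof.
  intros (l & Hw & <- & Hlen). revert u n Hw Hlen.
  induction l as [|a l IH]; intros u n Hw Hlen; cbn [is_walk length] in *.
  - apply (reach_le_mono _ _ 0); [apply reach_le_refl|lia].
  - destruct Hw as [Ha Hw]. rewrite last_cons_cons.
    replace n with ((n - 1) + 1) by lia. eapply reach_le_trans.
    + apply IH; auto. lia.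
    + now apply reach_le_adj, adj_sym.
Qed.

End Walks.

Section PathMetric.
Context {V : Type} (adj : V -> V -> Prop) (adj_sym : forall u v, adj u v -> adj v u)
  (Hconn : connected adj).

Lemma ex_least_reach (u v : V) :
  exists n, reach_le adj u v n /\ forall m, reach_le adj u v m -> n <= m.
Proof. apply nat_least, Hconn. Qed.

Definition dist (u v : V) : nat :=
  proj1_sig (constructive_indefinite_description _ (ex_least_reach u v)).

Lemma reach_le_dist (u v : V) : reach_le adj u v (dist u v).
Proof. unfold dist. destruct (constructive_indefinite_description _ _) as [n [H1 H2]]. exact H1. Qed.

Lemma dist_le (u v : V) (m : nat) : reach_le adj u v m -> dist u v <= m.
Proof. unfold dist. destruct (constructive_indefinite_description _ _) as [n [H1 H2]]. apply H2. Qed.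

Lemma reach_le_iff_dist (u v : V) (n : nat) : reach_le adj u v n <-> dist u v <= n.
Proof.
  split; [apply dist_le|]. intros H. eapply reach_le_mono; [apply reach_le_dist|exact H].
Qed.

Lemma dist_triangle (u v w : V) : dist u w <= dist u v + dist v w.
Proof. apply dist_le. eapply reach_le_trans; apply reach_le_dist. Qed.

Lemma dist_sym (u v : V) : dist u v = dist v u.
Proof.
  apply Nat.le_antisymm; apply dist_le; apply reach_le_sym; auto; apply reach_le_dist.
Qed.

Lemma dist_refl (u : V) : dist u u = 0.
Proof. pose proof (dist_le u u 0 (reach_le_refl adj u)). lia. Qed.

Lemma dist_eq1 (u v : V) : dist u v = 1 -> adj u v.
Proof.
  intros H. destruct (reach_le_1 adj u v) as [->|E]; auto.
  - rewrite <- H. apply reach_le_dist.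
  - now rewrite dist_refl in H.
Qed.

Definition geo (g : nat -> V) (x y : V) (n : nat) : Prop :=
  g 0 = x /\ g n = y /\ forall i j, i <= n -> j <= n -> dist (g i) (g j) = (i - j) + (j - i).

Lemma geo_dist_ends (g : nat -> V) (x y : V) (n : nat) : geo g x y n -> dist x y = n.
Proof. intros (<- & <- & H). rewrite H; lia. Qed.

Lemma geo_rev (g : nat -> V) (x y : V) (n : nat) : geo g x y n -> geo (fun i => g (n - i)) y x n.
Proof.
  intros (H0 & Hn & H). repeat split.
  - now rewrite Nat.sub_0_r.
  - now rewrite Nat.sub_diag.
  - intros i j Hi Hj. rewrite H by lia. lia.
Qed.

Lemma geo_sub (g : nat -> V) (x y : V) (n a b : nat) : geo g x y n -> a <= b -> b <= n ->
  geo (fun i => g (a + i)) (g a) (g b) (b - a).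
Proof.
  intros (H0 & Hn & H) Hab Hbn. repeat split.
  - now rewrite Nat.add_0_r.
  - f_equal; lia.
  - intros i j Hi Hj. rewrite H by lia. lia.
Qed.

Lemma geo_of_shortest_walk (x y : V) (l : list V) :
  is_walk adj x l -> last l x = y -> length l = dist x y ->
  geo (fun i => nth i (x :: l) y) x y (length l).
Proof.
  intros Hw Hl Hd. set (w := fun i => nth i (x :: l) y).
  assert (Hend : w (length l) = y) by (unfold w; now rewrite <- last_eq_nth).
  assert (Hstep : forall i j, i <= j -> j <= length l -> dist (w i) (w j) <= j - i)
    by (intros i j Hij Hj; apply dist_le, walk_nth_reach_le; auto).
  assert (Hle : forall i j, i <= j -> j <= length l -> dist (w i) (w j) = j - i).
  { intros i j Hij Hj. apply Nat.le_antisymm; [auto|].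
    pose proof (Hstep 0 i ltac:(lia) ltac:(lia)) as H0i.
    pose proof (Hstep j (length l) Hj (le_n _)) as Hjn. rewrite Hend in Hjn.
    pose proof (dist_triangle x (w i) y). pose proof (dist_triangle (w i) (w j) y).
    change (w 0) with x in H0i. lia. }
  split; [reflexivity|]. split; [exact Hend|].
  intros i j Hi Hj. destruct (le_lt_dec i j).
  - rewrite Hle; auto. lia.
  - rewrite dist_sym, Hle; auto; lia.
Qed.

Lemma geo_exists (x y : V) : exists g, geo g x y (dist x y).
Proof.
  destruct (reach_le_dist x y) as (l & Hw & Hl & Hlen).
  assert (Hd : length l = dist x y) by (apply Nat.le_antisymm; [exact Hlen|apply dist_le; now exists l]).
  exists (fun i => nth i (x :: l) y). rewrite <- Hd. now apply geo_of_shortest_walk.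
Qed.

Lemma geodesic_geo (x y : V) (l : list V) :
  geodesic adj x y l -> geo (fun i => nth i (x :: l) y) x y (length l).
Proof.
  intros (Hw & Hl & Hmin). apply geo_of_shortest_walk; auto.
  apply Nat.le_antisymm; [|apply dist_le; now exists l].
  destruct (reach_le_dist x y) as (l' & K1 & K2 & K3). specialize (Hmin l' K1 K2). lia.
Qed.

Lemma geo_geodesic (g : nat -> V) (x y : V) (n : nat) :
  geo g x y n -> geodesic adj x y (map g (seq 1 n)).
Proof.
  intros Hg. pose proof (geo_dist_ends _ _ _ _ Hg) as Hd. destruct Hg as (<- & <- & H).
  repeat split.
  - apply walk_of_fun. intros i Hi1 Hi2. apply dist_eq1. rewrite H by lia. lia.
  - apply last_map_seq.
  - intros l' K1 K2. rewrite length_map, length_seq, <- Hd. apply dist_le. now exists l'.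
Qed.

Definition slim (delta : nat) : Prop :=
  forall x y z a b c n1 n2 n3, geo a x y n1 -> geo b y z n2 -> geo c z x n3 ->
  forall i, i <= n1 -> exists j,
    (j <= n2 /\ dist (a i) (b j) <= delta) \/ (j <= n3 /\ dist (a i) (c j) <= delta).

Lemma slim_of_hyperbolic : hyperbolic adj -> exists delta, slim delta.
Proof.
  intros [_ [delta Hd]]. exists delta. intros x y z a b c n1 n2 n3 Ha Hb Hc i Hi.
  destruct (Hd x y z _ _ _ (geo_geodesic _ _ _ _ Ha) (geo_geodesic _ _ _ _ Hb)
              (geo_geodesic _ _ _ _ Hc) (a i)) as (w & Hw & Hr).
  - destruct Ha as [<- _]. apply In_map_seq. eauto.
  - destruct Hb as [<- _], Hc as [<- _].
    destruct Hw as [Hw|Hw]; apply In_map_seq in Hw; destruct Hw as (j & Hj & ->);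
      exists j; [left|right]; split; auto; now apply dist_le.
Qed.

Lemma hyperbolic_of_slim (delta : nat) : slim delta -> hyperbolic adj.
Proof.
  intros Hd. split; [exact Hconn|]. exists delta.
  intros x y z lxy lyz lzx G1 G2 G3 w Hw.
  apply geodesic_geo in G1, G2, G3.
  apply (In_nth _ _ y) in Hw. destruct Hw as (i & Hi & <-). simpl in Hi.
  destruct (Hd _ _ _ _ _ _ _ _ _ G1 G2 G3 i ltac:(lia)) as (j & [[Hj Hdj]|[Hj Hdj]]).
  - exists (nth j (y :: lyz) z). split; [left; apply nth_In; simpl; lia|].
    now apply reach_le_iff_dist.
  - exists (nth j (z :: lzx) x). split; [right; apply nth_In; simpl; lia|].
    now apply reach_le_iff_dist.
Qed.

End PathMetric.

Fixpoint min_upto (f : nat -> nat) (n : nat) : nat :=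
  match n with 0 => f 0 | S n' => Nat.min (min_upto f n') (f (S n')) end.

Fixpoint max_upto (f : nat -> nat) (n : nat) : nat :=
  match n with 0 => f 0 | S n' => Nat.max (max_upto f n') (f (S n')) end.

Lemma min_upto_le (f : nat -> nat) (n i : nat) : i <= n -> min_upto f n <= f i.
Proof.
  induction n as [|n IH]; intros Hi; simpl.
  - replace i with 0 by lia. lia.
  - destruct (Nat.eq_dec i (S n)) as [->|]; [lia|]. specialize (IH ltac:(lia)). lia.
Qed.

Lemma min_upto_attained (f : nat -> nat) (n : nat) : exists i, i <= n /\ min_upto f n = f i.
Proof.
  induction n as [|n (i & Hi & E)]; simpl; [now exists 0|].
  destruct (Nat.le_ge_cases (min_upto f n) (f (S n))).
  - exists i. split; [lia|]. rewrite Nat.min_l; auto.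
  - exists (S n). split; [lia|]. rewrite Nat.min_r; auto.
Qed.

Lemma max_upto_ge (f : nat -> nat) (n i : nat) : i <= n -> f i <= max_upto f n.
Proof.
  induction n as [|n IH]; intros Hi; simpl.
  - replace i with 0 by lia. lia.
  - destruct (Nat.eq_dec i (S n)) as [->|]; [lia|]. specialize (IH ltac:(lia)). lia.
Qed.

Lemma max_upto_attained (f : nat -> nat) (n : nat) : exists i, i <= n /\ max_upto f n = f i.
Proof.
  induction n as [|n (i & Hi & E)]; simpl; [now exists 0|].
  destruct (Nat.le_ge_cases (max_upto f n) (f (S n))).
  - exists (S n). split; [lia|]. rewrite Nat.max_r; auto.
  - exists i. split; [lia|]. rewrite Nat.max_l; auto.
Qed.

Lemma pow2_log_exists (N : nat) : exists k, N <= 2 ^ k /\ 2 ^ k <= 2 * N + 1.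
Proof.
  induction N as [|N (k & H1 & H2)]; [exists 0; simpl; lia|].
  destruct (le_lt_dec (S N) (2 ^ k)).
  - exists k. lia.
  - exists (S k). assert (2 ^ k <> 0) by (apply Nat.pow_nonzero; lia). simpl. lia.
Qed.

Lemma square_le_pow2 (k : nat) : k * k <= 4 * 2 ^ k.
Proof.
  induction k as [|k IH]; [simpl; lia|].
  destruct (le_lt_dec k 2) as [Hk|Hk].
  - destruct k as [|[|[|]]]; simpl; lia.
  - simpl. nia.
Qed.

Lemma pow2_le_linear_bounded (a b : nat) : exists k0, forall k, 2 ^ k <= a * k + b -> k <= k0.
Proof.
  exists (4 * a + 4 * b + 1). intros k Hk. pose proof (square_le_pow2 k).
  destruct (le_lt_dec k (4 * a + 4 * b + 1)); auto. nia.
Qed.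

Definition pconcat {V : Type} (f : nat -> V) (n : nat) (f' : nat -> V) : nat -> V :=
  fun i => if i <=? n then f i else f' (i - n).

Lemma pconcat_left {V : Type} (f f' : nat -> V) (n r : nat) : r <= n -> pconcat f n f' r = f r.
Proof. intros Hr. unfold pconcat. now rewrite (proj2 (Nat.leb_le _ _) Hr). Qed.

Lemma pconcat_right {V : Type} (f f' : nat -> V) (n r : nat) :
  f n = f' 0 -> n <= r -> pconcat f n f' r = f' (r - n).
Proof.
  intros E Hr. unfold pconcat. destruct (Nat.leb_spec r n).
  - replace r with n by lia. now rewrite Nat.sub_diag.
  - reflexivity.
Qed.

Section Morse.
Context {V : Type} (adj : V -> V -> Prop) (adj_sym : forall u v, adj u v -> adj v u)
  (Hconn : connected adj) (delta : nat) (Hslim : slim adj Hconn delta).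

Notation d := (dist adj Hconn).
Notation geo := (geo adj Hconn).

(* Paths may pause, so that walks of different lengths can be padded to a common length. *)
Definition lazy (c : nat -> V) (N : nat) : Prop := forall i, i < N -> d (c i) (c (S i)) <= 1.

Lemma lazy_dist (c : nat -> V) (N i j : nat) : lazy c N -> i <= j -> j <= N -> d (c i) (c j) <= j - i.
Proof.
  intros Hl Hij HjN. induction j as [|j IH].
  - replace i with 0 by lia. rewrite dist_refl; lia.
  - destruct (Nat.eq_dec i (S j)) as [->|]; [rewrite dist_refl; lia|].
    pose proof (dist_triangle adj Hconn (c i) (c j) (c (S j))).
    specialize (IH ltac:(lia) ltac:(lia)). specialize (Hl j ltac:(lia)). lia.
Qed.

Lemma lazy_of_reach_le (u v : V) (n : nat) :
  reach_le adj u v n -> exists f, f 0 = u /\ f n = v /\ lazy f n.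
Proof.
  intros (l & Hw & Hl & Hlen). exists (fun r => nth r (u :: l) v).
  split; [reflexivity|]. split; [now apply nth_cons_beyond|].
  intros r Hr. destruct (le_lt_dec (length l) r).
  - rewrite !nth_cons_beyond by (auto; lia). rewrite dist_refl. lia.
  - apply dist_le. replace 1 with (S r - r) by lia. apply walk_nth_reach_le; auto; lia.
Qed.

Lemma lazy_concat (f f' : nat -> V) (n n' : nat) :
  lazy f n -> lazy f' n' -> f n = f' 0 -> lazy (pconcat f n f') (n + n').
Proof.
  intros H1 H2 E i Hi. destruct (le_lt_dec (S i) n).
  - rewrite !pconcat_left by lia. apply H1; lia.
  - rewrite !pconcat_right by (auto; lia). replace (S i - n) with (S (i - n)) by lia. apply H2; lia.
Qed.

Lemma lazy_glue (Q : V -> Prop) (f f' : nat -> V) (n n' : nat) :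
  lazy f n -> lazy f' n' -> f n = f' 0 ->
  (forall r, r <= n -> Q (f r)) -> (forall r, r <= n' -> Q (f' r)) ->
  exists h, lazy h (n + n') /\ h 0 = f 0 /\ h (n + n') = f' n' /\ forall r, r <= n + n' -> Q (h r).
Proof.
  intros H1 H2 E Q1 Q2. exists (pconcat f n f'). split; [now apply lazy_concat|].
  split; [now apply pconcat_left; lia|].
  split; [rewrite pconcat_right by (auto; lia); f_equal; lia|].
  intros r Hr. destruct (le_lt_dec r n).
  - rewrite pconcat_left by lia. auto.
  - rewrite pconcat_right by (auto; lia). apply Q2. lia.
Qed.

Lemma lazy_between (Q : V -> Prop) (c : nat -> V) (N i1 i2 : nat) :
  lazy c N -> i1 <= N -> i2 <= N -> (forall i, i <= N -> Q (c i)) ->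
  exists s, lazy s ((i2 - i1) + (i1 - i2)) /\ s 0 = c i1 /\ s ((i2 - i1) + (i1 - i2)) = c i2 /\
    forall r, r <= (i2 - i1) + (i1 - i2) -> Q (s r).
Proof.
  intros Hl H1 H2 HQ. destruct (le_lt_dec i1 i2).
  - exists (fun r => c (i1 + r)). repeat split.
    + intros r Hr. replace (i1 + S r) with (S (i1 + r)) by lia. apply Hl. lia.
    + f_equal; lia.
    + f_equal; lia.
    + intros r Hr. apply HQ. lia.
  - exists (fun r => c (i1 - r)). repeat split.
    + intros r Hr. rewrite (dist_sym adj adj_sym). replace (i1 - r) with (S (i1 - S r)) by lia.
      apply Hl. lia.
    + f_equal; lia.
    + f_equal; lia.
    + intros r Hr. apply HQ. lia.
Qed.

Lemma geo_lazy (g : nat -> V) (x y : V) (m : nat) : geo g x y m -> lazy g m.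
Proof. intros (_ & _ & H) i Hi. rewrite H by lia. lia. Qed.

Lemma geo_dist (g : nat -> V) (x y : V) (m i j : nat) :
  geo g x y m -> i <= m -> j <= m -> d (g i) (g j) = (i - j) + (j - i).
Proof. intros (_ & _ & H). auto. Qed.

Lemma geo_far (z : V) (h : nat -> V) (a b : V) (p D : nat) :
  geo h a b p -> D <= d z b -> (p = 0 \/ D + p <= d z a) -> forall r, r <= p -> D <= d z (h r).
Proof.
  intros Hh Hb Ha r Hr. destruct Hh as (H0 & Hp & H).
  pose proof (dist_triangle adj Hconn z (h r) a). pose proof (dist_triangle adj Hconn z (h r) b).
  rewrite <- H0, (H r 0) in * by lia. rewrite <- Hp, (H r p) in * by lia. lia.
Qed.

(* Split the path at [c M], [M <= 2 ^ (k - 1)], and use slimness of the triangle [c 0, c M, c N]. *)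
Lemma geo_near_lazy_path (k N : nat) (c g : nat -> V) (m : nat) :
  N <= 2 ^ k -> lazy c N -> geo g (c 0) (c N) m ->
  forall t, t <= m -> exists i, i <= N /\ d (g t) (c i) <= delta * k + 1.
Proof.
  revert N c g m. induction k as [|k IH]; intros N c g m HN Hl Hg t Ht.
  - exists 0. split; [lia|].
    pose proof (geo_dist_ends adj Hconn _ _ _ _ Hg).
    pose proof (lazy_dist c N 0 N Hl ltac:(lia) ltac:(lia)).
    destruct Hg as (G0 & _ & G2). rewrite <- G0, G2 by lia. simpl in HN. lia.
  - set (M := Nat.min N (2 ^ k)).
    destruct (geo_exists adj adj_sym Hconn (c 0) (c M)) as [g1 Hg1].
    destruct (geo_exists adj adj_sym Hconn (c M) (c N)) as [g2 Hg2].
    set (n1 := d (c 0) (c M)) in *. set (n2 := d (c M) (c N)) in *.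
    destruct (Hslim _ _ _ _ _ _ _ _ _ Hg (geo_rev adj Hconn _ _ _ _ Hg2)
                (geo_rev adj Hconn _ _ _ _ Hg1) t Ht) as (j & [[Hj Hdj]|[Hj Hdj]]).
    + assert (Hg2' : geo g2 (c (M + 0)) (c (M + (N - M))) n2).
      { rewrite Nat.add_0_r. replace (M + (N - M)) with N by lia. exact Hg2. }
      assert (Hl2 : lazy (fun i => c (M + i)) (N - M)).
      { intros i Hi. replace (M + S i) with (S (M + i)) by lia. apply Hl. lia. }
      destruct (IH (N - M) _ _ _ ltac:(simpl in HN; lia) Hl2 Hg2' (n2 - j) ltac:(lia))
        as (i & Hi & Hdi).
      exists (M + i). split; [lia|].
      pose proof (dist_triangle adj Hconn (g t) (g2 (n2 - j)) (c (M + i))). nia.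
    + assert (Hl1 : lazy c M) by (intros i Hi; apply Hl; lia).
      destruct (IH M _ _ _ ltac:(lia) Hl1 Hg1 (n1 - j) ltac:(lia)) as (i & Hi & Hdi).
      exists i. split; [lia|].
      pose proof (dist_triangle adj Hconn (g t) (g1 (n1 - j)) (c i)). nia.
Qed.

Lemma lazy_detour_far (z a b : V) (c : nat -> V) (N i1 i2 D : nat) :
  lazy c N -> i1 <= N -> i2 <= N -> (forall i, i <= N -> D <= d z (c i)) ->
  (d a (c i1) = 0 \/ D + d a (c i1) <= d z a) -> (d b (c i2) = 0 \/ D + d b (c i2) <= d z b) ->
  exists s, let n := d a (c i1) + ((i2 - i1) + (i1 - i2)) + d b (c i2) in
    lazy s n /\ s 0 = a /\ s n = b /\ forall r, r <= n -> D <= d z (s r).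
Proof.
  intros Hl H1 H2 Hc Ha Hb.
  destruct (geo_exists adj adj_sym Hconn a (c i1)) as [h1 Hh1].
  destruct (geo_exists adj adj_sym Hconn b (c i2)) as [h2 Hh2].
  pose proof (geo_far z h1 _ _ _ D Hh1 (Hc i1 H1) Ha) as Far1.
  pose proof (geo_far z h2 _ _ _ D Hh2 (Hc i2 H2) Hb) as Far2.
  pose proof (geo_rev adj Hconn _ _ _ _ Hh2) as Hh2r.
  destruct (lazy_between (fun v => D <= d z v) c N i1 i2 Hl H1 H2 Hc) as (s & Hs & S0 & Sn & Fs).
  destruct (lazy_glue (fun v => D <= d z v) h1 s _ _ (geo_lazy _ _ _ _ Hh1) Hs
              (ltac:(destruct Hh1 as (_ & -> & _); auto)) Far1 Fs) as (h & Hh & H0 & Hn & Fh).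
  destruct (lazy_glue (fun v => D <= d z v) h _ _ _ Hh (geo_lazy _ _ _ _ Hh2r)
              (ltac:(destruct Hh2r as (-> & _); congruence))
              Fh (ltac:(intros r Hr; apply Far2; lia))) as (s' & Hs' & S'0 & S'n & Fs').
  exists s'. repeat split; auto.
  - destruct Hh1 as (<- & _). congruence.
  - rewrite S'n, Nat.sub_diag. now destruct Hh2 as (<- & _).
Qed.

Definition quasi_geodesic (K : nat) (c : nat -> V) (N : nat) : Prop :=
  forall i j, i <= j -> j <= N -> j - i <= K * d (c i) (c j) + K.

Lemma quasi_geodesic_index_dist (K : nat) (c : nat -> V) (N i j : nat) :
  quasi_geodesic K c N -> i <= N -> j <= N -> (j - i) + (i - j) <= K * d (c i) (c j) + K.
Proof.
  intros Hq Hi Hj. destruct (le_lt_dec i j).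
  - specialize (Hq i j ltac:(lia) Hj). lia.
  - specialize (Hq j i ltac:(lia) Hi). rewrite (dist_sym adj adj_sym) in Hq. lia.
Qed.

Definition path_gap (c : nat -> V) (N : nat) (g : nat -> V) (m : nat) : nat :=
  max_upto (fun t => min_upto (fun i => d (g t) (c i)) N) m.

Lemma path_gap_spec (c : nat -> V) (N : nat) (g : nat -> V) (m t : nat) :
  t <= m -> exists i, i <= N /\ d (g t) (c i) <= path_gap c N g m.
Proof.
  intros Ht. destruct (min_upto_attained (fun i => d (g t) (c i)) N) as (i & Hi & E).
  exists i. split; auto. rewrite <- E.
  apply (max_upto_ge (fun t => min_upto (fun i => d (g t) (c i)) N)), Ht.
Qed.

Lemma path_gap_endpoint (c : nat -> V) (N : nat) (g : nat -> V) (m t0 t : nat) :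
  geo g (c 0) (c N) m -> t <= m -> (t = 0 \/ t = m \/ d (g t0) (g t) = 2 * path_gap c N g m) ->
  exists i, i <= N /\ d (g t) (c i) <= path_gap c N g m /\
    (d (g t) (c i) = 0 \/ path_gap c N g m + d (g t) (c i) <= d (g t0) (g t)).
Proof.
  intros (G0 & Gm & _) Ht [->|[->|Ht0]].
  - exists 0. rewrite G0, dist_refl. split; [lia|]. split; [lia|]. now left.
  - exists N. rewrite Gm, dist_refl. split; [lia|]. split; [lia|]. now left.
  - destruct (path_gap_spec c N g m t Ht) as (i & Hi & Hdi). exists i. repeat split; auto. right. lia.
Qed.

(* Around a point [g t0] realising the gap [D], the detour [g t1 -> c -> g t2] with
   [t1, t2] at distance [2 D] from [t0] stays [D]-far from [g t0] but has length [O(D)];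
   bisecting it against the geodesic [g t1 g t2] gives [D <= delta * log2 (length) + 1]. *)
Lemma path_gap_log_bound (K : nat) (c : nat -> V) (N : nat) (g : nat -> V) (m : nat) :
  lazy c N -> quasi_geodesic K c N -> geo g (c 0) (c N) m ->
  exists k, 2 ^ k <= 2 * ((6 * K + 2) * path_gap c N g m + K) + 1 /\
            path_gap c N g m <= delta * k + 1.
Proof.
  intros Hl Hq Hg. set (D := path_gap c N g m).
  destruct (max_upto_attained (fun t => min_upto (fun i => d (g t) (c i)) N) m) as (t0 & Ht0 & ED).
  assert (Hfar : forall i, i <= N -> D <= d (g t0) (c i))
    by (intros i Hi; unfold D, path_gap; rewrite ED; exact (min_upto_le (fun i => d (g t0) (c i)) N i Hi)).
  set (t1 := t0 - 2 * D). set (t2 := Nat.min (t0 + 2 * D) m).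
  pose proof (geo_dist _ _ _ _ t0 t1 Hg Ht0 ltac:(lia)) as Dt1.
  pose proof (geo_dist _ _ _ _ t0 t2 Hg Ht0 ltac:(lia)) as Dt2.
  destruct (path_gap_endpoint c N g m t0 t1 Hg ltac:(lia) ltac:(lia)) as (i1 & Hi1 & P1 & C1).
  destruct (path_gap_endpoint c N g m t0 t2 Hg ltac:(lia) ltac:(lia)) as (i2 & Hi2 & P2 & C2).
  fold D in P1, C1, P2, C2.
  destruct (lazy_detour_far (g t0) (g t1) (g t2) c N i1 i2 D Hl Hi1 Hi2 Hfar C1 C2)
    as (s & Hs & S0 & Sn & Far).
  set (n := d (g t1) (c i1) + ((i2 - i1) + (i1 - i2)) + d (g t2) (c i2)) in *.
  destruct (pow2_log_exists n) as (k & Hk1 & Hk2).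
  pose proof (geo_sub adj Hconn g _ _ m t1 t2 Hg ltac:(lia) ltac:(lia)) as Hsub.
  rewrite <- S0, <- Sn in Hsub.
  destruct (geo_near_lazy_path k n s _ _ Hk1 Hs Hsub (t0 - t1) ltac:(lia)) as (r & Hr & Hdr).
  replace (t1 + (t0 - t1)) with t0 in Hdr by lia.
  specialize (Far r Hr).
  exists k. split; [|lia].
  assert (Hd12 : d (c i1) (c i2) <= 6 * D).
  { pose proof (dist_triangle adj Hconn (c i1) (g t1) (c i2)).
    pose proof (dist_triangle adj Hconn (g t1) (g t0) (c i2)).
    pose proof (dist_triangle adj Hconn (g t0) (g t2) (c i2)).
    rewrite (dist_sym adj adj_sym Hconn (c i1) (g t1)) in *.
    rewrite (dist_sym adj adj_sym Hconn (g t1) (g t0)) in *. lia. }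
  pose proof (quasi_geodesic_index_dist K c N i1 i2 Hq Hi1 Hi2).
  assert (K * d (c i1) (c i2) <= K * (6 * D)) by (apply Nat.mul_le_mono_l, Hd12).
  assert ((6 * K + 2) * D = K * (6 * D) + 2 * D) by ring.
  lia.
Qed.

Lemma geo_near_quasi_geodesic (K : nat) : exists D0, forall c N g m,
  lazy c N -> quasi_geodesic K c N -> geo g (c 0) (c N) m ->
  forall t, t <= m -> exists i, i <= N /\ d (g t) (c i) <= D0.
Proof.
  destruct (pow2_le_linear_bounded (2 * (6 * K + 2) * delta) (2 * (6 * K + 2) + 2 * K + 1))
    as [k0 Hk0].
  exists (delta * k0 + 1). intros c N g m Hl Hq Hg t Ht.
  destruct (path_gap_log_bound K c N g m Hl Hq Hg) as (k & Hk1 & Hk2).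
  set (D := path_gap c N g m) in *.
  assert (k <= k0).
  { apply Hk0.
    assert ((6 * K + 2) * D <= (6 * K + 2) * (delta * k + 1)) by (apply Nat.mul_le_mono_l; auto).
    nia. }
  destruct (path_gap_spec c N g m t Ht) as (i & Hi & Hdi). fold D in Hdi.
  exists i. split; auto. nia.
Qed.

(* Walking along [g], the last point close to a point of [c] beyond [c p] is followed by
   one close to a point before [c p]; both are within bounded distance of [c p]. *)
Lemma quasi_geodesic_near_geo (K : nat) : exists R, forall c N g m,
  lazy c N -> quasi_geodesic K c N -> geo g (c 0) (c N) m ->
  forall p, p <= N -> exists t, t <= m /\ d (c p) (g t) <= R.
Proof.
  destruct (geo_near_quasi_geodesic K) as [D0 HD0]. exists (K * (2 * D0 + 1) + K + D0).
  intros c N g m Hl Hq Hg p Hp.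
  destruct (nat_least (fun j => j <= m /\ exists s, p <= s /\ s <= N /\ d (g j) (c s) <= D0))
    as ([|j] & (Hj & s & Hs1 & Hs2 & Hds) & Hmin).
  { exists m. split; auto. exists N. destruct Hg as (_ & -> & _). rewrite dist_refl. lia. }
  - exists 0. split; [lia|]. destruct Hg as (G0 & _). rewrite G0 in *.
    pose proof (Hq 0 s ltac:(lia) Hs2). pose proof (lazy_dist c N 0 p Hl ltac:(lia) ltac:(lia)).
    rewrite (dist_sym adj adj_sym). nia.
  - destruct (HD0 c N g m Hl Hq Hg j ltac:(lia)) as (s' & Hs' & Hds').
    destruct (le_lt_dec p s') as [Hps|Hps].
    { assert (S j <= j) by (apply Hmin; split; [lia|]; exists s'; auto). lia. }
    exists j. split; [lia|].
    assert (Hd : d (c s') (c s) <= 2 * D0 + 1).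
    { pose proof (dist_triangle adj Hconn (c s') (g j) (c s)) as T1.
      pose proof (dist_triangle adj Hconn (g j) (g (S j)) (c s)) as T2.
      rewrite (geo_dist g _ _ m j (S j) Hg ltac:(lia) ltac:(lia)) in T2.
      rewrite (dist_sym adj adj_sym Hconn (c s') (g j)) in T1. lia. }
    pose proof (Hq s' s ltac:(lia) Hs2).
    pose proof (lazy_dist c N s' p Hl ltac:(lia) ltac:(lia)).
    pose proof (dist_triangle adj Hconn (c p) (c s') (g j)) as T.
    rewrite (dist_sym adj adj_sym Hconn (c p) (c s')), (dist_sym adj adj_sym Hconn (c s') (g j)) in T.
    nia.
Qed.

End Morse.

Section BoundedSupergraph.
Context {V : Type} (adj0 adj1 : V -> V -> Prop)
  (sym0 : forall u v, adj0 u v -> adj0 v u) (sym1 : forall u v, adj1 u v -> adj1 v u)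
  (sub01 : forall u v, adj0 u v -> adj1 u v) (L : nat)
  (HL : forall u v, adj1 u v -> reach_le adj0 u v L).

Lemma reach_le_super (u v : V) (n : nat) : reach_le adj1 u v n -> reach_le adj0 u v (L * n).
Proof.
  intros (l & Hw & <- & Hlen). apply (reach_le_mono adj0 _ _ (L * length l)); [|nia].
  clear Hlen. revert u Hw. induction l as [|a l IH]; intros u Hw; simpl in Hw.
  - apply (reach_le_mono adj0 _ _ 0); [apply reach_le_refl|lia].
  - destruct Hw as [H1 H2]. rewrite last_cons_cons. cbn [length].
    replace (L * S (length l)) with (L + L * length l) by lia.
    eapply reach_le_trans; [apply HL, H1|apply IH, H2].
Qed.

Lemma quasi_isometric_super : quasi_isometric adj0 adj1.
Proof.
  exists (fun u => u), (S L), 0. split; [|split].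
  - intros u v n H. apply (reach_le_mono adj1 _ _ n); [|nia]. now apply (reach_le_sub adj0).
  - intros u v n H. apply (reach_le_mono adj0 _ _ (L * n)); [now apply reach_le_super|nia].
  - intros w. exists w. apply reach_le_refl.
Qed.

Context (HL1 : 1 <= L) (Hc0 : connected adj0).

Lemma connected_super : connected adj1.
Proof.
  intros u v. destruct (Hc0 u v) as [n Hn]. exists n. now apply (reach_le_sub adj0).
Qed.

Notation d0 := (dist adj0 Hc0).
Notation d1 := (dist adj1 connected_super).

Lemma dist_super_le (u v : V) : d1 u v <= d0 u v.
Proof. apply dist_le, (reach_le_sub adj0); auto. apply reach_le_dist. Qed.

Lemma subdivided_path (a : nat -> V) (n : nat) : (forall k, k < n -> adj1 (a k) (a (S k))) ->
  exists c, lazy adj0 Hc0 c (n * L) /\ forall j, j <= n -> c (j * L) = a j.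
Proof.
  induction n as [|n IH]; intros Ha.
  - exists (fun _ => a 0). split; [intros i Hi; lia|]. intros j Hj. now replace j with 0 by lia.
  - destruct IH as (c & Hc & Hca); [intros; apply Ha; lia|].
    destruct (lazy_of_reach_le adj0 Hc0 _ _ _ (HL _ _ (Ha n (le_n _)))) as (f & F0 & FL & Hf).
    assert (E : c (n * L) = f 0) by (rewrite F0; auto).
    exists (pconcat c (n * L) f). split.
    + replace (S n * L) with (n * L + L) by lia. now apply lazy_concat.
    + intros j Hj. destruct (Nat.eq_dec j (S n)) as [->|].
      * rewrite pconcat_right by (auto; lia). now replace (S n * L - n * L) with L by lia.
      * rewrite pconcat_left by nia. apply Hca. lia.
Qed.

(* Replace each edge of the [d1]-geodesic by an [adj0]-walk of length exactly [L]. *)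
Lemma geo_super_shadow (a : nat -> V) (x y : V) (n : nat) :
  geo adj1 connected_super a x y n -> exists c,
    c 0 = x /\ c (n * L) = y /\ lazy adj0 Hc0 c (n * L) /\
    quasi_geodesic adj0 Hc0 (2 * L * L + L) c (n * L) /\
    (forall i, i <= n * L -> exists j, j <= n /\ d1 (c i) (a j) <= L) /\
    (forall j, j <= n -> c (j * L) = a j).
Proof.
  intros Hg. destruct (subdivided_path a n) as (c & Hc & Hca).
  { intros k Hk. apply (dist_eq1 adj1 connected_super). rewrite (geo_dist adj1 _ _ _ _ _ _ _ Hg) by lia. lia. }
  assert (Hnear : forall i, i <= n * L -> i / L <= n /\ d1 (c i) (a (i / L)) <= L).
  { intros i Hi. pose proof (Nat.div_mod_eq i L). pose proof (Nat.mod_upper_bound i L ltac:(lia)).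
    assert (i / L <= n) by (apply Nat.Div0.div_le_upper_bound; lia).
    split; auto. rewrite <- Hca, (dist_sym adj1 sym1) by auto.
    eapply Nat.le_trans; [apply dist_super_le|].
    eapply Nat.le_trans; [apply (lazy_dist adj0 Hc0 c (n * L)); auto; nia|]. lia. }
  destruct Hg as (G0 & Gn & G).
  exists c. split; [rewrite <- G0; apply (Hca 0); lia|].
  split; [rewrite <- Gn; apply Hca; lia|].
  split; [exact Hc|]. split; [|split; [intros i Hi; exists (i / L); now apply Hnear|exact Hca]].
  intros i j Hij Hj. destruct (Hnear i ltac:(lia)) as [Hi1 Hi2]. destruct (Hnear j Hj) as [Hj1 Hj2].
  assert (Hgap : (j / L - i / L) + (i / L - j / L) <= 2 * L + d0 (c i) (c j)).
  { pose proof (G (i / L) (j / L) Hi1 Hj1).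
    pose proof (dist_triangle adj1 connected_super (a (i / L)) (c i) (a (j / L))) as T.
    pose proof (dist_triangle adj1 connected_super (c i) (c j) (a (j / L))).
    pose proof (dist_super_le (c i) (c j)).
    rewrite (dist_sym adj1 sym1 connected_super (a (i / L)) (c i)) in T. lia. }
  assert (Hmono : i / L <= j / L) by (apply Nat.Div0.div_le_mono; lia).
  assert (Hji : j - i <= L * (j / L - i / L) + L).
  { pose proof (Nat.div_mod_eq i L). pose proof (Nat.div_mod_eq j L).
    pose proof (Nat.mod_upper_bound j L ltac:(lia)).
    rewrite Nat.mul_sub_distr_l. pose proof (Nat.mul_le_mono_l _ _ L Hmono). lia. }
  assert (L * (j / L - i / L) <= L * (2 * L + d0 (c i) (c j))) by (apply Nat.mul_le_mono_l; lia).
  nia.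
Qed.

Lemma geo_super_fellow_travel (delta : nat) : slim adj0 Hc0 delta -> exists C,
  forall a g x y n m, geo adj1 connected_super a x y n -> geo adj0 Hc0 g x y m ->
    (forall i, i <= n -> exists t, t <= m /\ d1 (a i) (g t) <= C) /\
    (forall t, t <= m -> exists i, i <= n /\ d1 (g t) (a i) <= C).
Proof.
  intros Hslim.
  destruct (geo_near_quasi_geodesic adj0 sym0 Hc0 delta Hslim (2 * L * L + L)) as [D0 HD0].
  destruct (quasi_geodesic_near_geo adj0 sym0 Hc0 delta Hslim (2 * L * L + L)) as [R HR].
  exists (R + D0 + L). intros a g x y n m Ha Hg.
  destruct (geo_super_shadow a x y n Ha) as (c & C0 & Cn & Hl & Hq & Hnear & Hca).
  rewrite <- C0, <- Cn in Hg. split.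
  - intros i Hi. destruct (HR c (n * L) g m Hl Hq Hg (i * L) ltac:(nia)) as (t & Ht & Hdt).
    exists t. split; [exact Ht|]. rewrite Hca in Hdt by exact Hi.
    pose proof (dist_super_le (a i) (g t)). lia.
  - intros t Ht. destruct (HD0 c (n * L) g m Hl Hq Hg t Ht) as (q & Hq' & Hdq).
    destruct (Hnear q Hq') as (j & Hj & Hdj). exists j. split; [exact Hj|].
    pose proof (dist_triangle adj1 connected_super (g t) (c q) (a j)).
    pose proof (dist_super_le (g t) (c q)). lia.
Qed.

Theorem hyperbolic_super : hyperbolic adj0 -> hyperbolic adj1.
Proof.
  intros Hh. destruct (slim_of_hyperbolic adj0 Hc0 Hh) as [delta Hslim].
  destruct (geo_super_fellow_travel delta Hslim) as [C HC].
  apply (hyperbolic_of_slim adj1 sym1 connected_super (C + delta + C)).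
  intros x y z a b c n1 n2 n3 Ga Gb Gc i Hi.
  destruct (geo_exists adj0 sym0 Hc0 x y) as [ga Hga].
  destruct (geo_exists adj0 sym0 Hc0 y z) as [gb Hgb].
  destruct (geo_exists adj0 sym0 Hc0 z x) as [gc Hgc].
  destruct (proj1 (HC _ _ _ _ _ _ Ga Hga) i Hi) as (t & Ht & Hat).
  destruct (Hslim _ _ _ _ _ _ _ _ _ Hga Hgb Hgc t Ht) as (t' & [[Ht' Hd']|[Ht' Hd']]).
  - destruct (proj2 (HC _ _ _ _ _ _ Gb Hgb) t' Ht') as (j & Hj & Hbj). exists j. left. split; [exact Hj|].
    pose proof (dist_triangle adj1 connected_super (a i) (ga t) (b j)).
    pose proof (dist_triangle adj1 connected_super (ga t) (gb t') (b j)).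
    pose proof (dist_super_le (ga t) (gb t')). lia.
  - destruct (proj2 (HC _ _ _ _ _ _ Gc Hgc) t' Ht') as (j & Hj & Hcj). exists j. right. split; [exact Hj|].
    pose proof (dist_triangle adj1 connected_super (a i) (ga t) (c j)).
    pose proof (dist_triangle adj1 connected_super (ga t) (gc t') (c j)).
    pose proof (dist_super_le (ga t) (gc t')). lia.
Qed.

End BoundedSupergraph.

Section AvoidingWalks.
Context {V : Type} (adj : V -> V -> Prop) (v : V).

Lemma walk_avoid (l : list V) (u : V) :
  is_walk adj u l -> u <> v -> ~ In v l -> is_walk (avoid_adj adj v) u l.
Proof.
  revert u; induction l as [|a l IH]; intros u H Hu Hn; simpl in *; auto.
  destruct H as [H1 H2]. split; [repeat split; auto|]. apply IH; auto.
Qed.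

(* The vertices just before the first and just after the last visit of [v]. *)
Lemma walk_through (l : list V) (u : V) :
  is_walk adj u l -> u <> v -> In v l -> last l u <> v ->
  exists a2 a1, In a2 (u :: l) /\ In a1 (u :: l) /\ adj a2 v /\ adj v a1 /\ a1 <> v /\
    reach_le (avoid_adj adj v) u a2 (length l) /\
    reach_le (avoid_adj adj v) a1 (last l u) (length l).
Proof.
  intros Hw Hu Hin Hend.
  destruct (split_at_first v l Hin) as (t1 & t2 & E1 & N1).
  destruct (split_at_last v l Hin) as (t3 & [|a1 t5] & E3 & N3).
  { rewrite E3, last_app_default in Hend. contradiction. }
  pose proof Hw as W1. rewrite E1, is_walk_app in W1. destruct W1 as [W1 [Ha2 _]].
  pose proof Hw as W3. rewrite E3, is_walk_app in W3. destruct W3 as [_ [_ [Ha1 W5]]].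
  exists (last t1 u), a1. repeat split; auto.
  - destruct (last_In_cons t1 u) as [<-|H]; [now left|]. right. rewrite E1. apply in_or_app. auto.
  - right. rewrite E3. apply in_or_app. right. right. now left.
  - intros ->. apply N3. now left.
  - apply (reach_le_mono _ _ _ (length t1)); [apply reach_le_walk, walk_avoid; auto|].
    rewrite E1, length_app. simpl. lia.
  - rewrite E3, last_app_default, !last_cons_cons.
    apply (reach_le_mono _ _ _ (length t5)).
    + apply reach_le_walk, walk_avoid; auto. intros ->. apply N3. now left.
      intros H. apply N3. now right.
    + rewrite length_app. simpl. lia.
Qed.

End AvoidingWalks.

Section GroupFacts.
Context (G : Grp).

Lemma gmul_cancel_l (g a b : G) : gmul g a = gmul g b -> a = b.
Proof.
  intros H. now rewrite <- (gmul1l _ a), <- (gmul1l _ b), <- (gmulVl _ g), <- !gassoc, H.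
Qed.

Lemma gmul_eq_r (g a b : G) : gmul g a = b -> g = gmul b (ginv a).
Proof. intros <-. now rewrite <- gassoc, gmulVr, gmul1r. Qed.

Lemma gmul_fix_r (g a : G) : gmul g a = a -> g = gone.
Proof. intros H. apply gmul_eq_r in H. now rewrite H, gmulVr. Qed.

End GroupFacts.

Section ConedOff.
Context (G : Grp) (I : Type) (P : I -> G -> Prop) (X : G -> Prop)
  (HPsub : forall i, subgroup (P i)).

Notation V := (CVert G I P).
Notation adj0 := (coned_adj G I P X).
Notation act := (cact G I P).

Lemma coned_adj_sym (u v : V) : adj0 u v -> adj0 v u.
Proof. destruct u, v; simpl; auto. intros (x & Hx & [E|E]); exists x; auto. Qed.

Lemma cact_inl (g a : G) : act g (inl a) = inl (gmul g a).
Proof. reflexivity. Qed.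

Lemma cact_eq_inl (g : G) (p : V) (b : G) : act g p = inl b -> exists u, p = inl u /\ b = gmul g u.
Proof. destruct p as [u|[i [C pf]]]; simpl; intros H; [injection H; eauto|discriminate]. Qed.

Lemma coned_adj_act (g : G) (u v : V) : adj0 u v <-> adj0 (act g u) (act g v).
Proof.
  destruct u as [a|[i [C pf]]], v as [b|[j [C' pf']]]; simpl; try tauto.
  - split; intros (x & Hx & [E|E]); exists x; split; auto.
    + left. now rewrite E, gassoc.
    + right. now rewrite E, gassoc.
    + left. apply (gmul_cancel_l G g). now rewrite E, gassoc.
    + right. apply (gmul_cancel_l G g). now rewrite E, gassoc.
  - now rewrite gassoc, gmulVl, gmul1l.
  - now rewrite gassoc, gmulVl, gmul1l.
Qed.

Lemma walk_act (g : G) (l : list V) (u : V) :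
  is_walk adj0 u l -> is_walk adj0 (act g u) (map (act g) l).
Proof.
  revert u; induction l as [|a l IH]; intros u H; simpl in *; auto.
  destruct H. split; auto. now apply coned_adj_act.
Qed.

Lemma coned_adj_cone_inl (c : {i : I & {C : G -> Prop | is_lcoset (P i) C}}) (z : V) :
  adj0 (inr c) z -> exists b, z = inl b.
Proof. destruct z; simpl; [eauto|contradiction]. Qed.

Definition cone (i : I) (a : G) : V :=
  inr (existT _ i (exist _ (fun h => exists p, P i p /\ h = gmul a p)
        (ex_intro _ a (fun h => iff_refl _)))).

Lemma cone_adj (i : I) (a p : G) : P i p -> adj0 (inl (gmul a p)) (cone i a).
Proof. simpl. eauto. Qed.

Lemma cone_adj_base (i : I) (a : G) : adj0 (inl a) (cone i a).
Proof. pose proof (cone_adj i a gone (proj1 (HPsub i))). now rewrite gmul1r in H. Qed.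

Lemma cayley_edge_reach_le (g h : G) :
  cay_adj (gen_all P X) g h -> reach_le adj0 (inl g) (inl h) 2.
Proof.
  intros (z & [Hz|[i Hz]] & E).
  - apply (reach_le_mono _ _ _ 1); [apply reach_le_adj; simpl; exists z; auto|lia].
  - replace 2 with (1 + 1) by lia. destruct E as [-> | ->].
    + apply reach_le_trans with (cone i g); apply reach_le_adj;
        [apply cone_adj_base|apply coned_adj_sym, cone_adj, Hz].
    + apply reach_le_trans with (cone i h); apply reach_le_adj;
        [apply cone_adj, Hz|apply coned_adj_sym, cone_adj_base].
Qed.

Lemma connected_cayley_coned (y : G) : connected (cay_adj (gen_all P X)) ->
  exists s, is_walk adj0 (inl gone) s /\ last s (inl gone) = inl y.
Proof.
  intros Hcay. destruct (Hcay gone y) as (n & l & Hw & <- & _). clear n.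
  enough (H : reach_le adj0 (inl gone) (inl (last l gone)) (2 * length l))
    by (destruct H as (s & Ws & Es & _); eauto).
  revert Hw. generalize (@gone G) as g. induction l as [|a l IH]; intros g Hw; simpl in Hw.
  - apply reach_le_refl.
  - destruct Hw as [H1 H2]. rewrite last_cons_cons. cbn [length].
    replace (2 * S (length l)) with (2 + 2 * length l) by lia.
    eapply reach_le_trans; [apply cayley_edge_reach_le, H1|apply IH, H2].
Qed.

Lemma replacement_walks (ly : list G) : connected (cay_adj (gen_all P X)) ->
  exists (Sg : list (list V)) (L : nat), 1 <= L /\
  (forall s, In s Sg -> is_walk adj0 (inl gone) s /\ length s <= L) /\
  (forall y, In y ly -> (exists s, In s Sg /\ last s (inl gone) = inl y) /\
                        (exists s, In s Sg /\ last s (inl gone) = inl (ginv y))).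
Proof.
  intros Hcay. induction ly as [|y ly (Sg & L & HL1 & HL2 & HL3)].
  - exists [], 1. split; [lia|]. split; intros ? [].
  - destruct (connected_cayley_coned y Hcay) as (s1 & W1 & E1).
    destruct (connected_cayley_coned (ginv y) Hcay) as (s2 & W2 & E2).
    exists (s1 :: s2 :: Sg), (L + length s1 + length s2). split; [lia|]. split.
    + intros s [<-|[<-|Hs]]; [split; auto; lia|split; auto; lia|].
      destruct (HL2 s Hs). split; auto; lia.
    + intros y' [<-|Hy]; [split; eexists; split; eauto; simpl; auto|].
      destruct (HL3 y' Hy) as ((s & Hs & Es) & (s' & Hs' & Es')).
      split; [exists s|exists s']; simpl; auto.
Qed.

End ConedOff.

Section ExtraEdges.
Context (G : Grp) (I : Type) (P : I -> G -> Prop) (X Y : G -> Prop).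

Notation V := (CVert G I P).
Notation adj0 := (coned_adj G I P X).
Notation adj1 := (coned_adj_plus G I P X Y).
Notation act := (cact G I P).

Definition extra_adj (u v : V) : Prop :=
  match u, v with
  | inl g, inl h => exists y, Y y /\ (h = gmul g y \/ g = gmul h y)
  | _, _ => False
  end.

Lemma extra_adj_sym (u v : V) : extra_adj u v -> extra_adj v u.
Proof. destruct u, v; simpl; auto. intros (y & Hy & [E|E]); exists y; auto. Qed.

Lemma coned_adj_plus_sym (u v : V) : adj1 u v -> adj1 v u.
Proof.
  intros [H|H]; [left; now apply coned_adj_sym|right; now apply (extra_adj_sym u v)].
Qed.

Lemma extra_adj_act (g : G) (u v : V) : extra_adj u v <-> extra_adj (act g u) (act g v).
Proof.
  destruct u as [a|[i [C pf]]], v as [b|[j [C' pf']]]; simpl; try tauto.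
  split; intros (y & Hy & [E|E]); exists y; split; auto.
  - left. now rewrite E, gassoc.
  - right. now rewrite E, gassoc.
  - left. apply (gmul_cancel_l G g). now rewrite E, gassoc.
  - right. apply (gmul_cancel_l G g). now rewrite E, gassoc.
Qed.

Lemma coned_adj_plus_act (g : G) (u v : V) : adj1 u v <-> adj1 (act g u) (act g v).
Proof.
  unfold coned_adj_plus. fold (extra_adj u v) (extra_adj (act g u) (act g v)).
  now rewrite <- (coned_adj_act G I P X), <- extra_adj_act.
Qed.

Variables (Sg : list (list V)) (L : nat) (ly : list G).
Hypotheses (HL1 : 1 <= L) (Hwalks : forall s, In s Sg -> is_walk adj0 (inl gone) s /\ length s <= L)
  (Hends : forall y, In y ly -> (exists s, In s Sg /\ last s (inl gone) = inl y) /\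
                              (exists s, In s Sg /\ last s (inl gone) = inl (ginv y)))
  (HY : forall y, Y y -> In y ly).

Lemma extra_edge_walk (g h : G) : extra_adj (inl g) (inl h) ->
  exists s, In s Sg /\ is_walk adj0 (inl g) (map (act g) s) /\ last (map (act g) s) (inl g) = inl h.
Proof.
  intros (y & Hy & E).
  assert (Htrans : forall s z, In s Sg -> last s (inl gone) = inl z -> h = gmul g z ->
    exists s, In s Sg /\ is_walk adj0 (inl g) (map (act g) s) /\ last (map (act g) s) (inl g) = inl h).
  { intros s z Hs Ez Eh. exists s. split; auto.
    pose proof (walk_act G I P X g s _ (proj1 (Hwalks s Hs))) as W.
    pose proof (last_map_default (act g) s (inl gone)) as Lm.
    rewrite cact_inl, gmul1r in W, Lm. split; auto. now rewrite Lm, Ez, Eh. }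
  destruct (Hends y (HY y Hy)) as ((s1 & H1 & E1) & (s2 & H2 & E2)). destruct E as [E|E].
  - exact (Htrans s1 y H1 E1 E).
  - exact (Htrans s2 (ginv y) H2 E2 (gmul_eq_r G _ _ _ (eq_sym E))).
Qed.

Lemma coned_adj_plus_reach_le (u v : V) : adj1 u v -> reach_le adj0 u v L.
Proof.
  intros [H|H].
  - apply (reach_le_mono _ _ _ 1); [now apply reach_le_adj|exact HL1].
  - destruct u as [g|], v as [h|]; try contradiction.
    destruct (extra_edge_walk g h H) as (s & Hs & W & E). exists (map (act g) s).
    rewrite length_map. repeat split; auto. apply Hwalks, Hs.
Qed.

Definition inl_vertices (l : list V) : list G :=
  flat_map (fun p => match p with inl u => [u] | inr _ => [] end) l.

Lemma in_inl_vertices (l : list V) (u : G) : In (inl u) l -> In u (inl_vertices l).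
Proof. intros H. apply in_flat_map. exists (inl u). simpl. auto. Qed.

Definition walk_quotients : list G :=
  flat_map (fun s => flat_map (fun u => map (fun u' => gmul (ginv u) u') (inl_vertices (inl gone :: s)))
                              (inl_vertices (inl gone :: s))) Sg.

Lemma in_walk_quotients (s : list V) (u u' : G) : In s Sg ->
  In (inl u) (inl gone :: s) -> In (inl u') (inl gone :: s) -> In (gmul (ginv u) u') walk_quotients.
Proof.
  intros Hs H1 H2. apply in_flat_map. exists s. split; auto.
  apply in_flat_map. exists u. split; [now apply in_inl_vertices|].
  apply in_map_iff. exists u'. split; auto. now apply in_inl_vertices.
Qed.

Section Fineness.
Variable cv : {i : I & {C : G -> Prop | is_lcoset (P i) C}}.
Notation v := (@inr G _ cv : V).
Hypothesis Hfine0 : fine_at adj0 v.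

Notation avoid0 := (avoid_adj adj0 v).

Definition nbr (a : V) : Prop := adj0 v a /\ a <> v.

Definition angle_ball (b : V) (m : nat) (a : V) : Prop := nbr a /\ reach_le avoid0 b a m.

Lemma angle_ball_finite (b : V) (m : nat) : nbr b -> finite_set (angle_ball b m).
Proof.
  intros [H1 H2]. apply (finite_set_sub _ _ (Hfine0 b m H1 H2)). intros a [[Ha1 Ha2] Hr]. auto.
Qed.

(* An extra edge is replaced by a translated walk; if that walk passes through the cone
   vertex [v], it enters and leaves [v] at vertices differing by a walk quotient. *)
Lemma extra_edge_avoid (g h : G) (a : V) (m : nat) :
  extra_adj (inl g) (inl h) -> reach_le avoid0 a (inl g) m ->
  reach_le avoid0 a (inl h) (m + L) \/
  exists b f, reach_le avoid0 a (inl b) (m + L) /\ adj0 v (inl b) /\ In f walk_quotients /\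
    adj0 v (inl (gmul b f)) /\ reach_le avoid0 (inl (gmul b f)) (inl h) L.
Proof.
  intros Hgh Ha. destruct (extra_edge_walk g h Hgh) as (s & Hs & W & E).
  set (tau := map (act g) s) in *.
  assert (Hlen : length tau <= L) by (unfold tau; rewrite length_map; apply Hwalks, Hs).
  assert (Hon : forall w, In w (inl g :: tau) -> adj0 v w ->
                 exists u, In (inl u) (inl gone :: s) /\ w = inl (gmul g u)).
  { intros w Hw Hvw. destruct (coned_adj_cone_inl G I P X cv w Hvw) as [b ->].
    assert (Hw' : In (inl b) (map (act g) (inl gone :: s))) by (simpl; now rewrite gmul1r).
    apply in_map_iff in Hw' as (p & Ep & Hp). destruct (cact_eq_inl G I P g p b Ep) as (u & -> & ->).
    eauto. }
  destruct (classic (In v tau)) as [Hin|Hnin].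
  - right. rewrite <- E in *.
    destruct (walk_through adj0 v tau (inl g) W ltac:(discriminate) Hin ltac:(rewrite E; discriminate))
      as (a2 & a1 & In2 & In1 & H2 & H1 & Ne1 & R2 & R1).
    apply coned_adj_sym in H2.
    destruct (Hon a2 In2 H2) as (u2 & Hu2 & ->). destruct (Hon a1 In1 H1) as (u1 & Hu1 & ->).
    exists (gmul g u2), (gmul (ginv u2) u1).
    rewrite <- gassoc, (gassoc _ u2), gmulVr, gmul1l.
    repeat split; auto; [|apply (in_walk_quotients s); auto|].
    + eapply reach_le_trans in R2; [|exact Ha]. eapply reach_le_mono; [exact R2|lia].
    + eapply reach_le_mono; [exact R1|lia].
  - left. rewrite <- E. eapply reach_le_trans; [exact Ha|].
    apply (reach_le_mono _ _ _ (length tau)); [|lia].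
    apply reach_le_walk, walk_avoid; auto. discriminate.
Qed.

Definition nbr_step (M : nat) (Nb : V -> Prop) (a : V) : Prop :=
  nbr a /\ (Nb a \/ exists b, Nb b /\ (angle_ball b M a \/
    exists b' f, angle_ball b M (inl b') /\ In f walk_quotients /\ a = inl (gmul b' f))).

Lemma nbr_step_finite (M : nat) (Nb : V -> Prop) :
  finite_set Nb -> (forall a, Nb a -> nbr a) -> finite_set (nbr_step M Nb).
Proof.
  intros [A HA] HN.
  destruct (finite_set_bigcup A (fun b a => Nb b /\ angle_ball b M a)) as [BL HBL].
  { intros b _. destruct (classic (Nb b)) as [Hb|Hb].
    - apply (finite_set_sub _ _ (angle_ball_finite b M (HN b Hb))). now intros a [_ H].
    - exists []. now intros a [H _]. }
  exists (A ++ BL ++ flat_map (fun e => match e with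
                                 | inl b' => map (fun f => inl (gmul b' f)) walk_quotients
                                 | inr _ => [] end) BL).
  intros a (_ & [Ha|(b & Hb & [Hab|(b' & f & Hbb & Hf & ->)])]); apply in_or_app; [left; now apply HA|..];
    right; apply in_or_app.
  - left. apply HBL. eauto.
  - right. apply in_flat_map. exists (inl b'). split; [apply HBL; eauto|]. apply in_map_iff. eauto.
Qed.

Lemma avoiding_walks_near (x : V) : nbr x -> forall k, exists Nb,
  finite_set Nb /\ (forall a, Nb a -> nbr a) /\
  forall l, is_walk (avoid_adj adj1 v) x l -> length l <= k ->
    exists a, Nb a /\ reach_le avoid0 a (last l x) (L * k).
Proof.
  intros Hx k. induction k as [|k (Nb & HNfin & HN & IH)].
  - exists (fun a => a = x). split; [exists [x]; intros a ->; now left|].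
    split; [now intros a ->|]. intros [|] _ Hl; [|simpl in Hl; lia].
    exists x. split; [reflexivity|]. exists []. simpl. repeat split. lia.
  - exists (nbr_step (L * S k) Nb). split; [now apply nbr_step_finite|]. split; [now intros a []|].
    intros l Hw Hl. destruct (le_lt_dec (length l) k) as [Hk|Hk].
    { destruct (IH l Hw Hk) as (a & Ha & Hr). exists a. split; [split; auto|].
      eapply reach_le_mono; [exact Hr|nia]. }
    destruct (exists_last (l := l) ltac:(intros ->; simpl in Hk; lia)) as (l' & w' & ->).
    rewrite length_app in Hl, Hk. simpl in Hl, Hk. rewrite last_last.
    apply is_walk_app in Hw as (Hw' & (Hww' & Hwv & Hw'v) & _).
    destruct (IH l' Hw' ltac:(lia)) as (a & Ha & Hr). set (w := last l' x) in *.
    destruct Hww' as [H0|Hext].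
    + exists a. split; [split; auto|].
      eapply reach_le_mono; [eapply reach_le_trans; [exact Hr|apply reach_le_adj; now split]|nia].
    + destruct w as [g|], w' as [h|]; try contradiction.
      destruct (extra_edge_avoid g h a (L * k) Hext Hr) as [Hah|(b & f & Hab & Hb & Hf & Hbf & R)].
      * exists a. split; [split; auto|]. eapply reach_le_mono; [exact Hah|nia].
      * exists (inl (gmul b f)). split; [|eapply reach_le_mono; [exact R|nia]].
        split; [split; [exact Hbf|discriminate]|]. right. exists a. split; auto. right.
        exists b, f. repeat split; auto; [discriminate|]. eapply reach_le_mono; [exact Hab|nia].
Qed.

Lemma fine_at_coned_plus : fine_at adj1 v.
Proof.
  intros x n Hx Hxv.
  assert (Hx0 : adj0 v x) by (destruct Hx as [H|H]; [exact H|contradiction]).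
  destruct (avoiding_walks_near x (conj Hx0 Hxv) n) as (Nb & [A HA] & HN & HW).
  apply (finite_set_sub (fun a => exists b, In b A /\ (Nb b /\ angle_ball b (L * n) a))).
  { apply finite_set_bigcup. intros b _. destruct (classic (Nb b)) as [Hb|Hb].
    - apply (finite_set_sub _ _ (angle_ball_finite b (L * n) (HN b Hb))). now intros a [_ H].
    - exists []. now intros a [H _]. }
  intros y (Hy & Hyv & l & Hw & <- & Hlen).
  destruct (HW l Hw Hlen) as (a & Ha & Hr). exists a. split; auto. split; auto.
  split; [|exact Hr]. split; [destruct Hy as [H|H]; [exact H|contradiction]|exact Hyv].
Qed.

End Fineness.

Lemma extra_edge_stab_finite (u w : V) : extra_adj u w -> finite_set (edge_stab act u w).
Proof.
  destruct u as [a|], w as [b|]; try contradiction. intros _.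
  exists [gone; gmul b (ginv a)]. intros g [[E _]|[E _]]; simpl in E; injection E as E.
  - left. symmetry. exact (gmul_fix_r G g a E).
  - right; left. symmetry. exact (gmul_eq_r G g a b E).
Qed.

Lemma GP_graph_coned_plus :
  GP_graph G I P V act adj0 -> GP_graph G I P V act adj1.
Proof.
  intros (A1 & A2 & _ & Hh & Orb & Stab & PStab & EStab & Fine).
  unfold GP_graph. do 2 (split; [auto|]). split; [apply coned_adj_plus_act|].
  split; [|do 3 (split; [auto|]); split].
  - apply (hyperbolic_super adj0 adj1 (coned_adj_sym G I P X) coned_adj_plus_sym
             (fun u v H => or_introl H) L coned_adj_plus_reach_le HL1 (proj1 Hh) Hh).
  - intros u w [H|H]; [now apply EStab|now apply extra_edge_stab_finite].
  - intros [a|cv] Hinf.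
    + exfalso. apply Hinf. exists [gone]. intros g Hg. left. symmetry.
      apply (gmul_fix_r G g a). now injection Hg.
    + apply fine_at_coned_plus, Fine, Hinf.
Qed.

Lemma thick_GP_graph_coned_plus :
  thick_GP_graph G I P V act adj0 -> thick_GP_graph G I P V act adj1.
Proof.
  intros (HGP & Hfin & u0 & Hfree & Hcones & (Sgen & Hgen & Hs) & reps & R1 & R2 & R3 & R4 & R5).
  split; [now apply GP_graph_coned_plus|]. split; [exact Hfin|]. exists u0.
  split; [exact Hfree|]. split.
  { intros i. destruct (Hcones i) as (w & Hw & Hst). exists w. split; [now left|exact Hst]. }
  split; [exists Sgen; split; [exact Hgen|intros s H; left; auto]|].
  exists reps. repeat split; auto. intros u Hu Hne. left. auto.
Qed.

End ExtraEdges.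

Theorem lemma2p13 (G : Grp) (I : Type) (P : I -> G -> Prop) (X Y : G -> Prop)
  (HPsub : forall i, subgroup (P i))
  (HPinf : forall i, ~ finite_set (P i))
  (Hemb : hyp_emb G I P X)
  (HY : finite_set Y) :
  quasi_isometric (coned_adj G I P X) (coned_adj_plus G I P X Y) /\
  (GP_graph G I P (CVert G I P) (cact G I P) (coned_adj G I P X) ->
   GP_graph G I P (CVert G I P) (cact G I P) (coned_adj_plus G I P X Y)) /\
  (thick_GP_graph G I P (CVert G I P) (cact G I P) (coned_adj G I P X) ->
   thick_GP_graph G I P (CVert G I P) (cact G I P) (coned_adj_plus G I P X Y)).
Proof.
  destruct Hemb as (_ & (Hcay & _) & _). destruct HY as [ly Hly].
  destruct (replacement_walks G I P X HPsub ly Hcay) as (Sg & L & HL1 & Hwalks & Hends).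
  split; [|split].
  - apply (quasi_isometric_super _ _ (fun u v H => or_introl H) L).
    exact (coned_adj_plus_reach_le G I P X Y Sg L ly HL1 Hwalks Hends Hly).
  - exact (GP_graph_coned_plus G I P X Y Sg L ly HL1 Hwalks Hends Hly).
  - exact (thick_GP_graph_coned_plus G I P X Y Sg L ly HL1 Hwalks Hends Hly).
Qed.
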